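(* Let $A$ be an R$^*$-algebra and $v\in A$ a partial isometry. If $vv^*\le v^*v$, then $vv^*=v^*v$.
   Context: An R$^*$-algebra is a (not necessarily closed, not necessarily unital) $^*$-subalgebra $A$ of $B(H)$, $H$ a complex Hilbert space, such that every self-adjoint element of $A$ has finite spectrum. For projections, $p\le q$ means $pq=p$. *)

From mathcomp Require Import all_boot all_algebra complex.
From mathcomp Require Import reals.
Set Implicit Arguments. Unset Strict Implicit. Unset Printing Implicit Defensive.
Import GRing.Theory Num.Theory.
Local Open Scope ring_scope.

Section Hilbert.
Variables (R : realType) (V : lmodType R[i]) (ip : V -> V -> R[i]).

Definition ipnorm (x : V) : R := Num.sqrt (@complex.Re R (ip x x)).

Definition is_inner_product : Prop :=
  [/\ forall y, linear (fun x => ip x y),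
      forall x y, ip y x = (ip x y)^*,
      forall x, 0 <= ip x x &
      forall x, ip x x = 0 -> x = 0].

Definition ip_complete : Prop :=
  forall u : nat -> V,
    (forall e : R, 0 < e -> exists N, forall m n, (N <= m)%N -> (N <= n)%N ->
        ipnorm (u m - u n) < e) ->
    exists x, forall e : R, 0 < e -> exists N, forall n, (N <= n)%N ->
        ipnorm (u n - x) < e.

Definition is_hilbert : Prop := is_inner_product /\ ip_complete.

Definition bounded_op (T : V -> V) : Prop :=
  linear T /\ exists M : R, forall x, ipnorm (T x) <= M * ipnorm x.

Definition is_adjoint (T S : V -> V) : Prop :=
  bounded_op S /\ forall x y, ip (T x) y = ip x (S y).

Definition in_spectrum (T : V -> V) (l : R[i]) : Prop :=
  ~ exists S : V -> V, bounded_op S /\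
      (forall x, S (T x - l *: x) = x) /\ (forall x, T (S x) - l *: S x = x).

Definition finite_spectrum (T : V -> V) : Prop :=
  exists s : seq R[i], forall l, in_spectrum T l -> l \in s.

Definition self_adjoint (T : V -> V) : Prop := bounded_op T /\ is_adjoint T T.

(* A is a (not necessarily closed, not necessarily unital) *-subalgebra of B(H) *)
Definition is_star_subalgebra (A : (V -> V) -> Prop) : Prop :=
  (forall T, A T -> bounded_op T) /\
  [/\ A (fun _ => 0),
      forall S T, A S -> A T -> A (fun x => S x + T x),
      forall (c : R[i]) T, A T -> A (fun x => c *: T x),
      forall S T, A S -> A T -> A (S \o T) &
      forall T, A T -> exists S, A S /\ is_adjoint T S].

Definition is_Rstar_algebra (A : (V -> V) -> Prop) : Prop :=
  is_star_subalgebra A /\ forall T, A T -> self_adjoint T -> finite_spectrum T.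

Definition is_projection (p : V -> V) : Prop := self_adjoint p /\ p \o p = p.
Definition proj_le (p q : V -> V) : Prop := p \o q = p.

Definition partial_isometry (v vs : V -> V) : Prop :=
  is_adjoint v vs /\ is_projection (vs \o v).

End Hilbert.

(* Write p = v^* v and q = v v^*.  If q <= p but q <> p, a nonzero vector xi
   in the range of p - q satisfies v^* xi = 0 and p xi = xi, so the vectors
   v^k xi are pairwise orthogonal with equal norms: v acts on them as the
   unilateral shift.  The self-adjoint element T = v + v^* of A then acts on
   them as the free Jacobi matrix, and for every -1 <= l <= 1 the truncated
   formal eigenvectors y_N = sum_(k <= N) U_k(l/2) v^k xi satisfy
   |(T - l) y_N|^2 <= 2 |xi|^2 and |y_N|^2 >= N/3 |xi|^2, so l lies in the
   spectrum of T.  The spectrum of T is therefore infinite, contradicting the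
   R^*-property. *)

From HB Require Import structures.
From mathcomp Require Import all_boot all_order all_algebra complex.
From mathcomp Require Import reals ring lra.
From mathcomp Require Import boolp.
Set Implicit Arguments.
Unset Strict Implicit.
Unset Printing Implicit Defensive.
Import Order.TTheory GRing.Theory Num.Theory.
Local Open Scope complex_scope.
Local Open Scope ring_scope.

Section InnerProduct.
Variables (R : realType) (V : lmodType R[i]) (ip : V -> V -> R[i]).
Hypothesis ipP : is_inner_product ip.

Let ipl_linear z : linear (ip^~ z). Proof. by case: ipP. Qed.

Lemma ipC x y : ip y x = (ip x y)^*. Proof. by case: ipP. Qed.

Lemma ipBl x y z : ip (x - y) z = ip x z - ip y z.
Proof. exact: (zmod_morphism_linear (ipl_linear z)). Qed.

Lemma ipDl x y z : ip (x + y) z = ip x z + ip y z.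
Proof. by have := ipl_linear z 1 x y; rewrite /= !scale1r. Qed.

Lemma ipZl a x z : ip (a *: x) z = a * ip x z.
Proof. exact: (scalable_linear (ipl_linear z)). Qed.

Lemma ip0l z : ip 0 z = 0.
Proof. by rewrite -(subrr 0) ipBl subrr. Qed.

Lemma ipNl x z : ip (- x) z = - ip x z.
Proof. by rewrite -sub0r ipBl ip0l sub0r. Qed.

Lemma ip_suml I (r : seq I) (P : pred I) (F : I -> V) z :
  ip (\sum_(i <- r | P i) F i) z = \sum_(i <- r | P i) ip (F i) z.
Proof. by elim/big_rec2: _ => [|i x y _ <-]; rewrite ?ip0l ?ipDl. Qed.

Lemma ipDr x y z : ip z (x + y) = ip z x + ip z y.
Proof. by rewrite ipC ipDl rmorphD [ip z x]ipC [ip z y]ipC. Qed.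

Lemma ipZr a x z : ip z (a *: x) = a^* * ip z x.
Proof. by rewrite ipC ipZl rmorphM [ip z x]ipC. Qed.

Lemma ip0r z : ip z 0 = 0.
Proof. by rewrite ipC ip0l conjC0. Qed.

Lemma ipxx_eq0 x : ip x x = 0 -> x = 0.
Proof. by case: ipP => _ _ _; apply. Qed.

Lemma ipxxE x : ip x x = (ipnorm ip x ^+ 2)%:C.
Proof.
have ge0 : 0 <= ip x x by case: ipP => _ _ + _; apply.
have reE : (complex.Re (ip x x))%:C = ip x x := RRe_real (ger0_real ge0).
by rewrite /ipnorm sqr_sqrtr ?reE // -ler0c reE.
Qed.

Lemma ipnorm_ge0 x : 0 <= ipnorm ip x. Proof. exact: sqrtr_ge0. Qed.

Lemma ipnorm_eq_sqrtM x z (c : R) : 0 <= c -> ip x x = c%:C * ip z z ->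
  ipnorm ip x = Num.sqrt c * ipnorm ip z.
Proof.
move=> c_ge0; rewrite !ipxxE -rmorphM => /complexI sq_eq.
apply/eqP; rewrite -(@eqrXn2 _ 2) ?mulr_ge0 ?ipnorm_ge0 ?sqrtr_ge0 //.
by rewrite exprMn (sqr_sqrtr c_ge0) sq_eq.
Qed.

Lemma ipl_ext a b : (forall z, ip a z = ip b z) -> a = b.
Proof. by move=> eq_ab; apply/subr0_eq/ipxx_eq0; rewrite ipBl eq_ab subrr. Qed.

Lemma ipr_ext a b : (forall z, ip z a = ip z b) -> a = b.
Proof. by move=> eq_ab; apply: ipl_ext => z; rewrite ipC eq_ab [ip b z]ipC. Qed.

Lemma ip_pythagoras x y : ip x y = 0 -> ip (x + y) (x + y) = ip x x + ip y y.
Proof.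
by move=> xy0; rewrite !ipDl !ipDr xy0 [ip y x]ipC xy0 conjC0 addr0 add0r.
Qed.

Lemma ipZZ (a : R) x : ip (a%:C *: x) (a%:C *: x) = (a ^+ 2)%:C * ip x x.
Proof.
by rewrite ipZl ipZr mulrA conj_Creal ?complex_real // rmorphXn expr2.
Qed.

Lemma adjoint_linear T S : (forall x y, ip (T x) y = ip x (S y)) -> linear T.
Proof.
move=> TS a x y; apply: ipl_ext => z.
by rewrite TS ipDl ipZl ipDl ipZl !TS.
Qed.

Lemma adjointC T S : is_adjoint ip T S -> forall x y, ip (S x) y = ip x (T y).
Proof. by case=> _ TS x y; rewrite ipC -TS -ipC. Qed.

Lemma adjoint_unique T S S' : is_adjoint ip T S -> is_adjoint ip T S' -> S = S'.
Proof.
move=> [_ TS] [_ TS']; apply: funext => x.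
by apply: ipr_ext => z; rewrite -TS TS'.
Qed.

Lemma self_adjoint_add_adjoint T S : is_adjoint ip T S ->
  bounded_op ip (fun x => T x + S x) -> self_adjoint ip (fun x => T x + S x).
Proof.
move=> TS bdd; split=> //; split=> // x y.
by rewrite ipDl ipDr (adjointC TS) addrC; case: TS => _ ->.
Qed.

End InnerProduct.

Lemma approx_eigenvalue_in_spectrum (R : realType) (V : lmodType R[i])
    (ip : V -> V -> R[i]) (T : V -> V) (l : R[i]) :
  (forall M : R, exists x, M * ipnorm ip (T x - l *: x) < ipnorm ip x) ->
  in_spectrum ip T l.
Proof.
move=> approx [S [[_ [M SM]] [ST _]]].
have [x] := approx M.
by have := SM (T x - l *: x); rewrite ST leNgt => /negP.
Qed.

(* [cheb l n] is the Chebyshev polynomial of the second kind U_n at l/2; its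
   recurrence makes [\sum_k cheb l k *: w_k] a formal eigenvector, for the
   eigenvalue l, of the shift plus its adjoint. *)
Fixpoint cheb (R : pzRingType) (l : R) (n : nat) : R :=
  match n with
  | 0 => 1
  | 1 => l
  | (m.+1 as n').+1 => l * cheb l n' - cheb l m
  end.

Lemma chebSS (R : pzRingType) (l : R) n :
  cheb l n.+2 = l * cheb l n.+1 - cheb l n.
Proof. by []. Qed.

Lemma cheb_invariant (R : comPzRingType) (l : R) n :
  cheb l n.+1 ^+ 2 - l * cheb l n.+1 * cheb l n + cheb l n ^+ 2 = 1.
Proof.
by elim: n => [|n IHn]; [rewrite /=; ring | rewrite chebSS -IHn; ring].
Qed.

Section ChebyshevBounds.
Variable R : realFieldType.
Implicit Types (l : R) (n : nat).

Lemma cheb_sqr_bounds l n : -1 <= l <= 1 ->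
  2 <= 3 * (cheb l n.+1 ^+ 2 + cheb l n ^+ 2) /\
  cheb l n.+1 ^+ 2 + cheb l n ^+ 2 <= 2.
Proof.
move=> /andP[l_ge l_le]; move: (cheb_invariant l n).
move: (cheb l n.+1) (cheb l n) => x y inv.
have [lp lm] : 0 <= 1 + l /\ 0 <= 1 - l by split; lra.
have := mulr_ge0 lp (sqr_ge0 (x - y)); have := mulr_ge0 lp (sqr_ge0 (x + y)).
have := mulr_ge0 lm (sqr_ge0 (x - y)); have := mulr_ge0 lm (sqr_ge0 (x + y)).
by split; nra.
Qed.

Lemma sum_cheb_sqr_ge l n : -1 <= l <= 1 ->
  n%:R <= 3 * \sum_(0 <= k < n.+1) cheb l k ^+ 2.
Proof.
move=> l_bd; set s := \sum_(0 <= k < n.+1) _.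
have pairs : \sum_(0 <= k < n) (cheb l k.+1 ^+ 2 + cheb l k ^+ 2) <= 2 * s.
  rewrite big_split /= mulr2n mulrDl mul1r lerD //.
    by rewrite /s big_nat_recl // lerDr sqr_ge0.
  by rewrite /s big_nat_recr // lerDl sqr_ge0.
have : \sum_(0 <= k < n) (2 / 3 : R) <= 2 * s.
  apply: le_trans pairs; apply: ler_sum => k _.
  by have [+ _] := cheb_sqr_bounds k l_bd; lra.
by rewrite sumr_const_nat subn0; lra.
Qed.

End ChebyshevBounds.

Lemma exists_notin_seq (T : eqType) (f : nat -> T) (s : seq T) :
  injective f -> exists n, f n \notin s.
Proof.
move=> f_inj.
have [f_in|/allPn[n _ fn_notin]] :=
  boolP (all (mem s \o f) (iota 0 (size s).+1)).
  suff : ((size s).+1 <= size s)%N by rewrite ltnn.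
  rewrite -[X in (X <= _)%N](size_iota 0) -(size_map f).
  apply: uniq_leq_size; first by rewrite (map_inj_uniq f_inj) iota_uniq.
  by move=> _ /mapP[n n_in ->]; apply: (allP f_in).
by exists n.
Qed.

Lemma exists_unit_real_notin (R : realType) (s : seq R[i]) :
  exists l : R, [/\ 0 <= l, l <= 1 & l%:C \notin s].
Proof.
have inj : injective (fun n : nat => (n.+1%:R^-1 : R)%:C).
  by move=> m n /complexI /invr_inj /eqP; rewrite eqr_nat => /eqP [].
have [n notin] := exists_notin_seq s inj.
by exists n.+1%:R^-1; rewrite invr_ge0 ler0n invf_le1 ?ltr0Sn ?ler1n.
Qed.

Section PartialIsometry.
Variables (R : realType) (V : lmodType R[i]) (ip : V -> V -> R[i]).
Variables v vs : V -> V.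
Hypotheses (ipP : is_inner_product ip) (vP : partial_isometry ip v vs)
  (qp : proj_le (v \o vs) (vs \o v)).

Let adj x y : ip (v x) y = ip x (vs y). Proof. by case: vP => -[]. Qed.
Let adjC x y : ip (vs x) y = ip x (v y). Proof. exact: (adjointC ipP vP.1). Qed.
Let p_idem x : vs (v (vs (v x))) = vs (v x).
Proof. by case: vP => _ [_ /(congr1 (@^~ x))]. Qed.
Let qp_eq x : v (vs (vs (v x))) = v (vs x).
Proof. exact: (congr1 (@^~ x) qp). Qed.

HB.instance Definition _ :=
  GRing.isLinear.Build R[i] V V *:%R v (adjoint_linear ipP adj).
HB.instance Definition _ := GRing.isLinear.Build R[i] V V *:%R vs vP.1.1.1.

Lemma v_vsv x : v (vs (v x)) = v x.
Proof.
suff : v (x - vs (v x)) = 0.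
  by move/eqP; rewrite linearB subr_eq0 eq_sym => /eqP.
by apply: (ipxx_eq0 ipP); rewrite adj !linearB /= p_idem subrr (ip0r ipP).
Qed.

Lemma vsv_vvs x : vs (v (v (vs x))) = v (vs x).
Proof.
apply: (ipl_ext ipP) => z.
by rewrite adjC !adj adjC qp_eq -adjC -adj.
Qed.

Lemma vsv_v x : vs (v (v x)) = v x.
Proof. by have := vsv_vvs (v x); rewrite v_vsv. Qed.

Lemma exists_wandering_vector y : v (vs y) != vs (v y) ->
  exists xi, [/\ xi != 0, vs xi = 0 & vs (v xi) = xi].
Proof.
move=> gap; exists (vs (v y) - v (vs y)); split.
- by rewrite subr_eq0 eq_sym.
- apply: (ipxx_eq0 ipP); rewrite -adj.
  by rewrite !linearB /= qp_eq v_vsv subrr (ip0l ipP).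
- by rewrite !linearB /= p_idem vsv_vvs.
Qed.

Section Shift.
Variable xi : V.
Hypotheses (vs_xi : vs xi = 0) (vsv_xi : vs (v xi) = xi).

Local Notation w k := (iter k v xi).

Lemma vsv_w k : vs (v (w k)) = w k.
Proof. by case: k => [|k] /=; rewrite ?vsv_xi ?vsv_v. Qed.

Lemma ip_w j k : ip (w j) (w k) = if j == k then ip xi xi else 0.
Proof.
elim: j k => [|j IHj] [|k] //=.
- by rewrite (ipC ipP) adj vs_xi (ip0r ipP) conjC0.
- by rewrite adj vs_xi (ip0r ipP).
- by rewrite adj vsv_w IHj.
Qed.

Variable l : R.

Local Notation Tl := (v \+ vs \- l%:C \*: idfun).
Local Notation y N := (\sum_(0 <= k < N.+1) (cheb l k)%:C *: w k).

Lemma Tl_wS k : Tl (w k.+1) = w k.+2 + w k - l%:C *: w k.+1.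
Proof. by rewrite /= vsv_w. Qed.

Lemma Tl_y N : Tl (y N) = (cheb l N)%:C *: w N.+1 + (- cheb l N.+1)%:C *: w N.
Proof.
elim: N => [|N IHN].
  by rewrite big_nat1 linearZ /= rmorph1 !scale1r vs_xi addr0 rmorphN scaleNr.
have TlP a b c : Tl (a + c *: b) = Tl a + c *: Tl b by rewrite linearD linearZ.
rewrite big_nat_recr // TlP IHN Tl_wS.
(* Pairing with an arbitrary z turns the identity in V into one in R[i]. *)
apply: (ipl_ext ipP) => z.
by rewrite !(ipDl ipP, ipNl ipP, ipZl ipP) chebSS; ring.
Qed.

Lemma ip_y_w N j : (N < j)%N -> ip (y N) (w j) = 0.
Proof.
move=> ltNj; rewrite (ip_suml ipP) big_nat big1 // => k /andP[_ ltkN].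
by rewrite (ipZl ipP) ip_w ltn_eqF ?mulr0 // (leq_trans ltkN).
Qed.

Lemma ip_yy N :
  ip (y N) (y N) = (\sum_(0 <= k < N.+1) cheb l k ^+ 2)%:C * ip xi xi.
Proof.
elim: N => [|N IHN]; first by rewrite !big_nat1 (ipZZ ipP (cheb l 0)).
rewrite big_nat_recr // (ip_pythagoras ipP); last first.
  by rewrite (ipZr ipP) ip_y_w ?mulr0.
rewrite IHN (ipZZ ipP (cheb l N.+1)) ip_w eqxx [in RHS]big_nat_recr //.
by rewrite rmorphD mulrDl.
Qed.

Lemma ip_Tl_y N : ip (Tl (y N)) (Tl (y N)) =
  (cheb l N.+1 ^+ 2 + cheb l N ^+ 2)%:C * ip xi xi.
Proof.
rewrite Tl_y addrC (ip_pythagoras ipP); last first.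
  by rewrite (ipZl ipP) (ipZr ipP) ip_w ltn_eqF ?mulr0.
rewrite (ipZZ ipP (- _)) (ipZZ ipP (cheb l N)) !ip_w !eqxx sqrrN.
by rewrite rmorphD mulrDl addrC.
Qed.

Lemma shift_in_spectrum : xi != 0 -> -1 <= l <= 1 ->
  in_spectrum ip (fun x => v x + vs x) l%:C.
Proof.
move=> xi_neq0 l_bd; apply: approx_eigenvalue_in_spectrum => M.
have xi_gt0 : 0 < ipnorm ip xi.
  rewrite lt_def ipnorm_ge0 andbT; apply: contraNneq xi_neq0 => xi0.
  by apply/eqP/(ipxx_eq0 ipP); rewrite (ipxxE ipP) xi0 expr0n rmorph0.
have /archi_boundP N_gt : 0 <= 6 * M ^+ 2 by rewrite mulr_ge0 ?sqr_ge0.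
set N := Num.bound _ in N_gt.
have [_ q_le2] := cheb_sqr_bounds N l_bd.
have S_ge := sum_cheb_sqr_ge N l_bd.
exists (y N).
rewrite (ipnorm_eq_sqrtM ipP _ (ip_Tl_y N)) ?addr_ge0 ?sqr_ge0 //.
rewrite (ipnorm_eq_sqrtM ipP _ (ip_yy N)) ?sumr_ge0 // => [|k _]; last first.
  exact: sqr_ge0.
rewrite mulrA ltr_pM2r //.
apply: (@le_lt_trans _ _ (`|M| * Num.sqrt (cheb l N.+1 ^+ 2 + cheb l N ^+ 2))).
  by rewrite ler_wpM2r ?sqrtr_ge0 ?ler_norm.
have M2_ge0 := sqr_ge0 M.
have : M ^+ 2 * (cheb l N.+1 ^+ 2 + cheb l N ^+ 2) <= M ^+ 2 * 2.
  by rewrite ler_wpM2l.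
by rewrite -sqrtr_sqr -sqrtrM // ltr_sqrt; lra.
Qed.

End Shift.

End PartialIsometry.

Theorem proposition6p1 (R : realType) (V : lmodType R[i]) (ip : V -> V -> R[i])
  (hH : is_hilbert ip) (A : (V -> V) -> Prop) (hA : is_Rstar_algebra ip A)
  (v vs : V -> V) (hv : A v) (hpi : partial_isometry ip v vs)
  (hle : proj_le (v \o vs) (vs \o v)) :
  v \o vs = vs \o v.
Proof.
have [[ipP _] [[A_bdd [_ A_add _ _ A_adj]] A_fin]] := (hH, hA).
apply: funext => y /=; apply/eqP/negPn/negP => gap.
have [xi [xi_neq0 vs_xi vsv_xi]] := exists_wandering_vector ipP hpi hle gap.
have [S [AS adjS]] := A_adj v hv.
rewrite (adjoint_unique ipP adjS hpi.1) in AS.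
have AT := A_add _ _ hv AS.
have [s specT] := A_fin _ AT (self_adjoint_add_adjoint ipP hpi.1 (A_bdd _ AT)).
have [l [l_ge0 l_le1 l_notin]] := exists_unit_real_notin s.
move: l_notin => /negP; apply; apply: specT.
apply: (shift_in_spectrum ipP hpi hle vs_xi vsv_xi xi_neq0).
by apply/andP; split; lra.
Qed.
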